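(* Let $d,n\in\mathbb{N}$ be such that $h_c=h_c(d,n)$ is finite. For every $\epsilon\in(0,1]$ there exists $\gamma>0$ depending only on $\epsilon,d,n$ such that the following holds. Let $B$ be an axis-parallel box in $\mathbb{R}^d$ and $S$ a set of $m\ge h_c$ points in $\mathbb{R}^d$ such that at least $\epsilon m$ points of $S$ cannot be covered by any $n$ translated copies of $B$. Let $0<\delta\le 1$. If one independently samples $\frac{1}{\gamma}\ln\frac{1}{\delta}$ sets, each a uniformly random $h_c$-element subset of $S$, then with probability at least $1-\delta$ some sampled set cannot be covered by any $n$ translated copies of $B$.
   Context: An axis-parallel box in $\mathbb{R}^d$ is a set $[\alpha_1,\beta_1]\times\dots\times[\alpha_d,\beta_d]$. ''At least $\epsilon m$ points of $S$ cannot be covered by any $n$ translated copies of $B$'' means that for any $n$ translates of $B$ at least $\epsilon m$ points of $S$ lie outside their union. A family is $n$-pierceable if some set of at most $n$ points meets every member. Given families $\mathcal{F}_1,\dots,\mathcal{F}_m$, a colorful $t$-tuple is $(C_1,\dots,C_t)$ with $C_j\in\mathcal{F}_{i_j}$ for pairwise distinct $i_j$. $h_c(d,n)$ denotes the smallest positive integer $h$ such that whenever $\mathcal{F}_1,\dots,\mathcal{F}_h$ are collections of axis-parallel boxes in $\mathbb{R}^d$ with every colorful $h$-tuple $n$-pierceable, some $\mathcal{F}_i$ is $n$-pierceable. *)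

From Stdlib Require Import Reals.
From mathcomp Require Import all_boot.
From mathcomp Require Import boolp.

Set Implicit Arguments.
Unset Strict Implicit.
Unset Printing Implicit Defensive.
Local Open Scope R_scope.

Definition point (d : nat) := 'I_d -> R.

Record box (d : nat) := Box {
  lo : 'I_d -> R;
  hi : 'I_d -> R;
  lo_le_hi : forall i, (Rle (lo i) (hi i)) }.

Definition in_box d (B : box d) (x : point d) : Prop :=
  forall i, (lo B i <= x i <= hi B i).

Definition in_translate d (B : box d) (t : point d) (x : point d) : Prop :=
  forall i, (lo B i + t i <= x i <= hi B i + t i).

(* A family of boxes (a predicate on boxes) is n-pierceable: some set of at
   most n points (given as n points, repetitions allowed) meets every member. *)
Definition pierceable d (n : nat) (F : box d -> Prop) : Prop :=
  exists q : 'I_n -> point d, forall C, F C -> exists j, in_box C (q j).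

(* A colorful h-tuple uses
   all h distinct families, i.e. is a choice c i in F_i for every i. *)
Definition hc_property (d n h : nat) : Prop :=
  (0 < h)%N /\
  forall F : 'I_h -> box d -> Prop,
    (forall c : 'I_h -> box d, (forall i, F i (c i)) ->
       pierceable n (fun C => exists i, C = c i)) ->
    exists i, pierceable n (F i).

(* h = h_c(d,n), and in particular h_c(d,n) is finite. *)
Definition is_hc (d n h : nat) : Prop :=
  hc_property d n h /\ forall h', hc_property d n h' -> (h <= h')%N.

Definition coverable d n (B : box d) m (p : 'I_m -> point d) (A : {set 'I_m}) : Prop :=
  exists t : 'I_n -> point d, forall i, i \in A -> exists j, in_translate B (t j) (p i).

Definition n_uncovered d n (B : box d) m (p : 'I_m -> point d) (t : 'I_n -> point d) : nat :=
  #|[set i : 'I_m | `[< ~ (exists j, in_translate B (t j) (p i)) >]]|.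

(* Sample space: k independent uniformly random h-element subsets of S
   (S indexed by 'I_m): all k-tuples of h-subsets, uniformly. *)
Definition samples (k h m : nat) : {set {ffun 'I_k -> {set 'I_m}}} :=
  [set w : {ffun 'I_k -> {set 'I_m}} | [forall j, #|w j| == h]].

Definition prob_some_uncoverable d n (B : box d) m (p : 'I_m -> point d) (k h : nat) : R :=
  (INR #|[set w in samples k h m | `[< exists j, ~ coverable n B p (w j) >]]|
   / INR #|samples k h m|).

From Stdlib Require Import Reals Lra Lia Classical ZArith.
From mathcomp Require Import all_boot.
From mathcomp Require Import boolp.

Set Implicit Arguments.
Unset Strict Implicit.
Unset Printing Implicit Defensive.

(* A translate B + t covers x exactly when t lies in the reflected box x - B,
   so covering points by n translates of B is piercing their reflected boxes by
   n points.  The colorful Helly property of h = h_c(d,n) thus says: if the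
   sets A_1, ..., A_h are each uncoverable, some transversal x_1 in A_1, ...,
   x_h in A_h is uncoverable.  As at least eps m points escape any n
   translates, deleting fewer than eps m points leaves an uncoverable set;
   greedily this gives r ~ eps m / (2h) pairwise disjoint uncoverable blocks of
   size at most h.  Any h of the blocks have an uncoverable transversal, which
   meets exactly these blocks, so at least C(r,h) >= gamma C(m,h) of the
   h-subsets are uncoverable, where gamma = (eps / (4h(h+1)))^h (when eps m is
   small, a single uncoverable h-subset suffices).  All k samples are then
   coverable with probability at most (1 - gamma)^k <= exp(-gamma k) <= delta. *)

Lemma ffact_le_expn n k : n ^_ k <= n ^ k.
Proof.
rewrite ffact_prod -[k in n ^ k]card_ord -prod_nat_const.
by apply: leq_prod => i _; apply: leq_subr.
Qed.

Lemma expn_subn_le_ffact n k : (n - k) ^ k <= n ^_ k.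
Proof.
rewrite ffact_prod -[k in _ ^ k]card_ord -prod_nat_const.
by apply: leq_prod => i _; apply: leq_sub2l; apply: ltnW.
Qed.

Lemma bin_le_expn n k : 'C(n, k) <= n ^ k.
Proof.
apply: leq_trans (ffact_le_expn n k); rewrite -bin_ffact leq_pmulr //.
exact: fact_gt0.
Qed.

Lemma expn_subn_bin_le r m k : (r - k) ^ k * 'C(m, k) <= 'C(r, k) * m ^ k.
Proof.
rewrite -(leq_pmul2r (fact_gt0 k)) -mulnA bin_ffact mulnAC bin_ffact.
exact: leq_mul (expn_subn_le_ffact r k) (ffact_le_expn m k).
Qed.

Lemma exists_superset_card (T : finType) (E : {set T}) k :
  #|E| <= k <= #|T| -> exists2 E' : {set T}, E \subset E' & #|E'| = k.
Proof.
elim: k => [|k IHk] /andP [leEk lekT].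
  by exists E => //; apply/eqP; rewrite -leqn0.
have [eqEk | neEk] := eqVneq #|E| k.+1; first by exists E.
have [E' sEE' cardE'] : exists2 E' : {set T}, E \subset E' & #|E'| = k.
  by apply: IHk; rewrite -ltnS ltn_neqAle neEk leEk ltnW.
have /subsetPn [y _ yE'] : ~~ ([set: T] \subset E').
  by apply: contraTN lekT => /subset_leq_card; rewrite cardsT cardE' -ltnNge.
exists (y |: E'); first by rewrite (subset_trans sEE') // subsetUr.
by rewrite cardsU1 yE' cardE'.
Qed.

Local Open Scope R_scope.

Lemma INR_expn a b : INR (a ^ b)%N = INR a ^ b.
Proof. by elim: b => [|b IHb] //=; rewrite expnS -multE mult_INR IHb. Qed.

Lemma INR_leq a b : (a <= b)%N -> INR a <= INR b.
Proof. by move/leP; apply: le_INR. Qed.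

Lemma exists_nat_floor x : 0 <= x -> exists r : nat, INR r <= x < INR r + 1.
Proof.
move=> x_ge0; have [int_le int_gt] := base_Int_part x.
have int_ge0 : (0 <= Int_part x)%Z.
  have : (-1 < Int_part x)%Z by apply: lt_IZR; rewrite /=; lra.
  lia.
exists (Z.to_nat (Int_part x)); rewrite INR_IZR_INZ Z2Nat.id //; lra.
Qed.

Lemma pow_le_of_log_bound (q g delta : R) (k : nat) :
  0 < g -> 0 <= q <= 1 - g -> 0 < delta -> / g * ln (/ delta) <= INR k ->
  q ^ k <= delta.
Proof.
move=> g_gt0 q_bounds delta_gt0 k_large.
have k_large' : - g * INR k <= ln delta.
  rewrite ln_Rinv // in k_large.
  have := Rmult_le_compat_l g _ _ (Rlt_le _ _ g_gt0) k_large.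
  rewrite -Rmult_assoc Rinv_r; lra.
have exp_pow : exp (- g) ^ k = exp (- g * INR k).
  rewrite -Rpower_pow; last exact: exp_pos.
  by rewrite /Rpower ln_exp Rmult_comm.
apply: Rle_trans (_ : exp (- g) ^ k <= delta).
  by apply: pow_incr; have := exp_ineq1_le (- g); lra.
rewrite exp_pow -[delta in _ <= delta]exp_ln //.
have [lt_gk | ->] := Rle_lt_or_eq_dec _ _ k_large'; last exact: Rle_refl.
exact/Rlt_le/exp_increasing.
Qed.

Definition reflected_box d (B : box d) (x : point d) : box d.
Proof.
refine {| lo := fun i => x i - hi B i; hi := fun i => x i - lo B i; lo_le_hi := _ |}.
by move=> i; have := lo_le_hi B i; lra.
Defined.

Lemma in_reflected_box d (B : box d) x t :
  in_box (reflected_box B x) t <-> in_translate B t x.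
Proof. by split=> xt i; have := xt i; rewrite /=; lra. Qed.

Definition reflected_boxes d (B : box d) m (p : 'I_m -> point d) (A : {set 'I_m}) :
  box d -> Prop := fun C => exists2 y, y \in A & C = reflected_box B (p y).

Lemma coverable_pierceable d n (B : box d) m (p : 'I_m -> point d) A :
  coverable n B p A <-> pierceable n (reflected_boxes B p A).
Proof.
split=> [[t covA] | [t pierceA]]; exists t.
  by move=> _ [y yA ->]; have [j yj] := covA y yA; exists j; apply/in_reflected_box.
move=> y yA; have [j yj] := pierceA _ (ex_intro2 _ _ y yA erefl).
by exists j; apply/in_reflected_box.
Qed.

Lemma colorful_uncoverable_transversal d n h (B : box d) m (p : 'I_m -> point d)
    (A : 'I_h -> {set 'I_m}) :
  hc_property d n h -> (forall i, ~ coverable n B p (A i)) ->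
  exists2 x : 'I_h -> 'I_m, (forall i, x i \in A i) &
    ~ coverable n B p [set x i | i : 'I_h].
Proof.
move=> [_ colorful] uncovA; apply: NNPP => no_transversal.
have [i] : exists i, pierceable n (reflected_boxes B p (A i)).
  apply: colorful => c Ac.
  have /fin_all_exists [x xAc] :
      forall i, exists y, y \in A i /\ c i = reflected_box B (p y).
    by move=> i; have [y yA cy] := Ac i; exists y.
  have : coverable n B p [set x i | i : 'I_h].
    apply: NNPP => uncov; apply: no_transversal; exists x => // i; exact: (xAc i).1.
  move/coverable_pierceable => [t pierce_x]; exists t => _ [i ->].
  by rewrite (xAc i).2; apply: pierce_x; exists (x i); rewrite ?imset_f.
by move/coverable_pierceable; apply: uncovA.
Qed.

Section DisjointTransversal.
Variables (I J T : finType) (Bk : J -> {set T}) (f : I -> J) (x : I -> T).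
Hypothesis disjoint_Bk : forall j j', j != j' -> [disjoint Bk j & Bk j'].
Hypothesis x_in_Bk : forall i, x i \in Bk (f i).

Lemma transversal_block_eq i j : x i \in Bk j -> j = f i.
Proof.
move=> xj; apply/eqP; apply: contraTT (x_in_Bk i) => ne_jf.
by rewrite (disjointFr (disjoint_Bk ne_jf) xj).
Qed.

Lemma transversal_inj : injective f -> injective x.
Proof.
by move=> f_inj i i' eq_x; apply: f_inj; apply: transversal_block_eq; rewrite -eq_x.
Qed.

Lemma blocks_met_transversal :
  [set j | ~~ [disjoint [set x i | i : I] & Bk j]] = [set f i | i : I].
Proof.
apply/setP => j; rewrite inE -setI_eq0; apply/set0Pn/imsetP.
  by move=> [_ /setIP [/imsetP [i _ ->] xj]]; exists i => //; apply: transversal_block_eq.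
by move=> [i _ ->]; exists (x i); rewrite inE imset_f ?x_in_Bk.
Qed.

End DisjointTransversal.

Section UncoverableSubsets.
Variables (d n h : nat) (B : box d) (m : nat) (p : 'I_m -> point d).

Definition coverable_subsets :=
  [set E : {set 'I_m} | (#|E| == h) && `[< coverable n B p E >]].

Definition uncoverable_subsets :=
  [set E : {set 'I_m} | (#|E| == h) && ~~ `[< coverable n B p E >]].

Lemma card_coverable_subsets :
  (#|coverable_subsets| + #|uncoverable_subsets|)%N = 'C(m, h).
Proof.
set sets_h := [set E : {set 'I_m} | #|E| == h].
set cov := [set E : {set 'I_m} | `[< coverable n B p E >]].
have -> : coverable_subsets = sets_h :&: cov by apply/setP => E; rewrite !inE.
have -> : uncoverable_subsets = sets_h :\: cov by apply/setP => E; rewrite !inE andbC.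
by rewrite cardsID card_draws card_ord.
Qed.

Lemma coverableS (E E' : {set 'I_m}) :
  E \subset E' -> coverable n B p E' -> coverable n B p E.
Proof. by move=> /subsetP sEE' [t covE']; exists t => i /sEE'; apply: covE'. Qed.

Hypothesis hcP : hc_property d n h.

Lemma uncoverable_small_subset (A : {set 'I_m}) : ~ coverable n B p A ->
  exists E : {set 'I_m}, [/\ E \subset A, (#|E| <= h)%N & ~ coverable n B p E].
Proof.
move=> uncovA.
have [x xA uncov_x] := colorful_uncoverable_transversal hcP (fun _ : 'I_h => uncovA).
exists [set x i | i : 'I_h]; split=> //.
  by apply/subsetP => _ /imsetP [i _ ->].
by rewrite -[h in (_ <= h)%N]card_ord leq_imset_card.
Qed.

Lemma uncoverable_subsets_gt0 (A : {set 'I_m}) : (h <= m)%N -> ~ coverable n B p A ->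
  (0 < #|uncoverable_subsets|)%N.
Proof.
move=> le_hm /uncoverable_small_subset [E [_ cardE uncovE]].
have [E' sEE' cardE'] : exists2 E' : {set 'I_m}, E \subset E' & #|E'| = h.
  by apply: exists_superset_card; rewrite cardE card_ord.
apply/card_gt0P; exists E'; rewrite inE cardE' eqxx /=.
by apply/asboolPn => covE'; apply: uncovE; apply: coverableS covE'.
Qed.

Lemma card_uncoverable_subsets_ge_bin r (Bk : 'I_r -> {set 'I_m}) :
  (forall j, ~ coverable n B p (Bk j)) ->
  (forall j j', j != j' -> [disjoint Bk j & Bk j']) ->
  ('C(r, h) <= #|uncoverable_subsets|)%N.
Proof.
move=> uncovBk disjointBk.
pose blocks_met (E : {set 'I_m}) := [set j | ~~ [disjoint E & Bk j]].
rewrite -[r in 'C(r, _)]card_ord -card_draws.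
apply: leq_trans (leq_imset_card blocks_met uncoverable_subsets).
apply/subset_leq_card/subsetP => J.
rewrite inE => /eqP cardJ.
pose f i := enum_val (cast_ord (esym cardJ) i).
have f_inj : injective f by move=> i i' /enum_val_inj/cast_ord_inj.
have [x xBk uncov_x] := colorful_uncoverable_transversal hcP (fun i => uncovBk (f i)).
apply/imsetP; exists [set x i | i : 'I_h].
  rewrite inE card_imset; last exact: transversal_inj disjointBk xBk f_inj.
  by rewrite card_ord eqxx; apply/asboolPn.
rewrite /blocks_met (blocks_met_transversal disjointBk xBk); apply/eqP; rewrite eq_sym eqEcard.
rewrite card_imset // card_ord cardJ leqnn andbT.
by apply/subsetP => _ /imsetP [i _ ->]; apply: enum_valP.
Qed.

Variable eps : R.
Hypothesis many_uncovered :
  forall t : 'I_n -> point d, eps * INR m <= INR (n_uncovered B p t).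

Lemma uncoverable_setC (R0 : {set 'I_m}) :
  INR #|R0| < eps * INR m -> ~ coverable n B p (~: R0).
Proof.
move=> small_R0 [t covR0C].
have : (n_uncovered B p t <= #|R0|)%N.
  apply/subset_leq_card/subsetP => i; rewrite inE => /asboolP uncov_i.
  by apply/negPn/negP => iR0C; apply: uncov_i; apply: covR0C; rewrite inE.
by move/INR_leq; have := many_uncovered t; lra.
Qed.

Lemma greedy_disjoint_uncoverable r : INR (r * h)%N < eps * INR m ->
  exists Bk : nat -> {set 'I_m}, exists2 U : {set 'I_m}, (#|U| <= r * h)%N &
    forall j, (j < r)%N -> [/\ Bk j \subset U, ~ coverable n B p (Bk j) &
      forall j', (j' < j)%N -> [disjoint Bk j' & Bk j]].
Proof.
elim: r => [|r IHr] small_r; first by exists (fun _ => set0), set0; rewrite ?cards0.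
have small_r' : INR (r * h)%N < eps * INR m.
  by apply: Rle_lt_trans small_r; apply: INR_leq; rewrite mulSn leq_addl.
have [Bk [U cardU BkU]] := IHr small_r'.
have [E [EUC cardE uncovE]] :=
  uncoverable_small_subset (uncoverable_setC (Rle_lt_trans _ _ _ (INR_leq cardU) small_r')).
exists (fun j => if j == r then E else Bk j), (E :|: U) => [|j].
  by rewrite mulSn (leq_trans (leq_card_setU _ _).1) ?leq_add ?cardE.
rewrite ltnS leq_eqVlt => /orP [/eqP -> | lt_jr] /=; rewrite ?eqxx.
  split=> // [|j' lt_j'r]; first exact: subsetUl.
  have [BkU' _ _] := BkU j' lt_j'r.
  by rewrite (ltn_eqF lt_j'r) disjoint_sym disjoints_subset (subset_trans EUC) ?setCS.
have [BkU' uncovBk disjointBk] := BkU j lt_jr.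
rewrite (ltn_eqF lt_jr); split=> // [|j' lt_j'j]; first by rewrite (subset_trans BkU') ?subsetUr.
by rewrite (ltn_eqF (ltn_trans lt_j'j lt_jr)); apply: disjointBk.
Qed.

Lemma exists_disjoint_uncoverable r : INR (r * h)%N < eps * INR m ->
  exists Bk : 'I_r -> {set 'I_m}, (forall j, ~ coverable n B p (Bk j)) /\
    (forall j j', j != j' -> [disjoint Bk j & Bk j']).
Proof.
move=> /greedy_disjoint_uncoverable [Bk [U _ BkP]].
exists (fun j => Bk j); split=> [j | j j' ne_jj']; first by have [] := BkP j (ltn_ord j).
have [lt_jj' | lt_j'j | /val_inj eq_jj'] := ltngtP j j'.
- by have [_ _ ->] := BkP j' (ltn_ord j').
- by rewrite disjoint_sym; have [_ _ ->] := BkP j (ltn_ord j).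
- by rewrite eq_jj' eqxx in ne_jj'.
Qed.

Lemma card_uncoverable_subsets_lower r : INR (r * h)%N < eps * INR m ->
  ((r - h) ^ h * 'C(m, h) <= #|uncoverable_subsets| * m ^ h)%N.
Proof.
move=> /exists_disjoint_uncoverable [Bk [uncovBk disjointBk]].
apply: leq_trans (expn_subn_bin_le r m h) _; apply: leq_mul => //.
exact: card_uncoverable_subsets_ge_bin uncovBk disjointBk.
Qed.

Lemma uncoverable_subsets_density : 0 < eps -> (h <= m)%N ->
  (eps / (4 * INR h * (INR h + 1))) ^ h * INR 'C(m, h) <= INR #|uncoverable_subsets|.
Proof.
move=> eps_gt0 le_hm.
have h_ge1 : 1 <= INR h := INR_leq hcP.1.
have m_gt0 : 0 < INR m by apply: lt_0_INR; apply/ltP; apply: leq_trans hcP.1 le_hm.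
set H := INR h in h_ge1 *.
set alpha := eps * INR m / (4 * H * (H + 1)).
have alpha_gt0 : 0 < alpha by apply: Rdiv_lt_0_compat; nra.
have mh_gt0 : 0 < INR m ^ h := pow_lt _ _ m_gt0.
suff key : alpha ^ h * INR 'C(m, h) <= INR #|uncoverable_subsets| * INR m ^ h.
  have gamma_alpha : (eps / (4 * H * (H + 1))) ^ h * INR m ^ h = alpha ^ h.
    by rewrite -Rpow_mult_distr /alpha; congr (_ ^ _); field; lra.
  apply: (Rmult_le_reg_r _ _ _ mh_gt0).
  by rewrite Rmult_assoc [_ * INR m ^ h]Rmult_comm -Rmult_assoc gamma_alpha.
have C_le : INR 'C(m, h) <= INR m ^ h by rewrite -INR_expn; apply/INR_leq/bin_le_expn.
have [alpha_le1 | alpha_gt1] := Rle_lt_dec alpha 1.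
  have bad_ge1 : 1 <= INR #|uncoverable_subsets|.
    have uncovT : ~ coverable n B p (~: set0).
      by apply: uncoverable_setC; rewrite cards0 /=; nra.
    exact: INR_leq (uncoverable_subsets_gt0 le_hm uncovT).
  have : alpha ^ h <= 1 by rewrite -(pow1 h); apply: pow_incr; lra.
  have := pos_INR 'C(m, h); nra.
(* [r] is the floor of [eps m / (2 h)]. *)
have [r [r_le r_gt]] : exists r : nat, INR r <= 2 * (H + 1) * alpha < INR r + 1.
  by apply: exists_nat_floor; nra.
have small_r : INR (r * h)%N < eps * INR m.
  have : 2 * (H + 1) * alpha * H = eps * INR m / 2 by rewrite /alpha; field; lra.
  rewrite -multE mult_INR -/H; nra.
have le_hr : (h <= r)%N by apply/leP/INR_le; rewrite -/H; nra.
have alpha_le : alpha <= INR (r - h) by rewrite -minusE minus_INR -?/H; [nra | apply/leP].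
apply: Rle_trans (_ : INR (r - h) ^ h * INR 'C(m, h) <= _).
  by apply: Rmult_le_compat_r (pos_INR _) _; apply: pow_incr; lra.
rewrite -!INR_expn -!mult_INR; apply: INR_leq.
exact: card_uncoverable_subsets_lower small_r.
Qed.

End UncoverableSubsets.

Lemma card_ffun_in (aT rT : finType) (A : {set rT}) :
  #|[set w : {ffun aT -> rT} | [forall j, w j \in A]]| = (#|A| ^ #|aT|)%N.
Proof. by rewrite -card_ffun_on; apply: eq_card => w; rewrite inE; apply/forallP/ffun_onP. Qed.

Section Sampling.
Variables (d n : nat) (B : box d) (m : nat) (p : 'I_m -> point d) (k h : nat).

Lemma prob_some_uncoverableE : (h <= m)%N ->
  prob_some_uncoverable n B p k h =
  1 - (INR #|coverable_subsets n h B p| / INR 'C(m, h)) ^ k.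
Proof.
move=> le_hm.
pose good := [set w : {ffun 'I_k -> {set 'I_m}} |
  [forall j, w j \in coverable_subsets n h B p]].
have samplesE : samples k h m = [set w : {ffun 'I_k -> {set 'I_m}} |
  [forall j, w j \in [set E : {set 'I_m} | #|E| == h]]].
  by apply/setP => w; rewrite !inE; apply: eq_forallb => j; rewrite inE.
have good_sub : good \subset samples k h m.
  apply/subsetP => w; rewrite !inE => /forallP w_good; apply/forallP => j.
  by have := w_good j; rewrite inE => /andP [].
have eventE : [set w in samples k h m | `[< exists j, ~ coverable n B p (w j) >]] =
              samples k h m :\: good.
  apply/setP => w; rewrite !inE; apply/andP/andP => [[sw /asboolP [j uncov]] | [bad sw]].
    split=> //; apply/forallPn; exists j; rewrite inE.
    by apply/negP => /andP [_ /asboolP].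
  split=> //; apply/asboolP; have [j] := forallPn bad; rewrite inE (forallP sw j) /=.
  by move/asboolPn; exists j.
have card_samples : #|samples k h m| = ('C(m, h) ^ k)%N.
  by rewrite samplesE card_ffun_in card_draws !card_ord.
have card_good : #|good| = (#|coverable_subsets n h B p| ^ k)%N.
  by rewrite card_ffun_in card_ord.
have := cardsID good (samples k h m).
rewrite (setIidPr good_sub) -eventE card_good card_samples.
move/(f_equal INR); rewrite -plusE plus_INR !INR_expn => card_split.
have C_gt0 : 0 < INR 'C(m, h) by apply: lt_0_INR; apply/ltP; rewrite bin_gt0.
have Ck_gt0 : 0 < INR 'C(m, h) ^ k := pow_lt _ _ C_gt0.
rewrite /prob_some_uncoverable card_samples INR_expn /Rdiv Rpow_mult_distr pow_inv.
rewrite -card_split in Ck_gt0 *.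
set G := INR #|coverable_subsets n h B p| ^ k in Ck_gt0 *.
set E := INR #|[set w in samples k h m | _]| in Ck_gt0 *.
by field; lra.
Qed.

End Sampling.

Lemma prob_some_uncoverable_ge d n (B : box d) m (p : 'I_m -> point d) h k gamma delta :
  (h <= m)%N -> 0 < gamma ->
  gamma * INR 'C(m, h) <= INR #|uncoverable_subsets n h B p| ->
  0 < delta -> / gamma * ln (/ delta) <= INR k ->
  1 - delta <= prob_some_uncoverable n B p k h.
Proof.
move=> le_hm gamma_gt0 dense delta_gt0 k_large.
rewrite prob_some_uncoverableE //.
have C_gt0 : 0 < INR 'C(m, h) by apply: lt_0_INR; apply/ltP; rewrite bin_gt0.
have := card_coverable_subsets n h B p.
move/(f_equal INR); rewrite -plusE plus_INR => card_split.
suff : (INR #|coverable_subsets n h B p| / INR 'C(m, h)) ^ k <= delta by lra.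
apply: pow_le_of_log_bound gamma_gt0 _ delta_gt0 k_large.
split; first exact: Rle_mult_inv_pos (pos_INR _) C_gt0.
apply: (Rmult_le_reg_r _ _ _ C_gt0); rewrite /Rdiv Rmult_assoc Rinv_l; lra.
Qed.

Theorem theorem12 :
  forall (d n hc : nat), is_hc d n hc ->
  forall eps : R, (0 < eps <= 1) ->
  exists gamma : R, (0 < gamma) /\
    forall (B : box d) (m : nat) (p : 'I_m -> point d),
      injective p -> (hc <= m)%N ->
      (forall t : 'I_n -> point d, (eps * INR m <= INR (n_uncovered B p t))) ->
      forall delta : R, (0 < delta <= 1) ->
      forall k : nat, (/ gamma * ln (/ delta) <= INR k) ->
        (1 - delta <= prob_some_uncoverable n B p k hc).
Proof.
move=> d n hc [hcP _] eps [eps_gt0 _].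
have hc_ge1 : 1 <= INR hc := INR_leq hcP.1.
pose gamma := (eps / (4 * INR hc * (INR hc + 1))) ^ hc.
have gamma_gt0 : 0 < gamma by apply/pow_lt/Rdiv_lt_0_compat; nra.
exists gamma; split=> // B m p _ le_hcm many_uncovered delta [delta_gt0 _] k.
have dense := uncoverable_subsets_density hcP many_uncovered eps_gt0 le_hcm.
exact: prob_some_uncoverable_ge le_hcm gamma_gt0 dense delta_gt0.
Qed.
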